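(* Let $\widehat n\ge1$ be an integer and define $\theta_0=1/\widehat n$, $\theta_{k+1}=\frac{\sqrt{\theta_k^4+4\theta_k^2}-\theta_k^2}{2}$ for $k\ge0$, so that $\frac{1-\theta_k}{\theta_k^2}=\frac{1}{\theta_{k-1}^2}$ for all $k\ge0$, with the convention $\frac{1}{\theta_{-1}^2}=\widehat n^2-\widehat n$. Then: (1) $0\le\theta_k\le\theta_{k-1}\le\cdots\le\theta_1\le\theta_0=\frac1{\widehat n}$ for all $k\ge1$; (2) $\sum_{k=K_0}^K\frac1{\theta_k}=\frac1{\theta_K^2}-\frac1{\theta_{K_0-1}^2}$ for all integers $0\le K_0\le K$; (3) $\frac k2+\frac k{2\widehat n}+\widehat n\ge\frac1{\theta_k}\ge\frac k2+\widehat n$ for all $k\ge0$; (4) if $\upsilon>1$ and $K_0$ is a nonnegative integer with $K_0\le\left\lfloor\frac{K}{\upsilon(1+1/\widehat n)}+1\right\rfloor$, then $\frac1{\theta_K^2}-\frac1{\theta_{K_0-1}^2}\ge\left(\frac{K^2}4+\widehat nK\right)\left(1-\frac1\upsilon\right)$. *)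

From HB Require Import structures.
From mathcomp Require Import all_boot all_order all_algebra.
From mathcomp Require Import reals.
Set Implicit Arguments. Unset Strict Implicit. Unset Printing Implicit Defensive.
Import Order.TTheory GRing.Theory Num.Theory.
Local Open Scope ring_scope.

Fixpoint theta {R : realType} (nhat : nat) (k : nat) : R :=
  match k with
  | O => 1 / nhat%:R
  | S k' => let t := theta nhat k' in
            (Num.sqrt (t ^+ 4 + 4 * t ^+ 2) - t ^+ 2) / 2
  end.

(* inv_sq_prev nhat k = 1/theta_{k-1}^2, with the convention
   1/theta_{-1}^2 = nhat^2 - nhat. *)
Definition inv_sq_prev {R : realType} (nhat : nat) (k : nat) : R :=
  match k with
  | O => (nhat%:R) ^+ 2 - nhat%:R
  | S k' => 1 / (theta nhat k') ^+ 2
  end.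

From HB Require Import structures.
From mathcomp Require Import all_boot all_order all_algebra.
From mathcomp Require Import reals.
From mathcomp Require Import lra ring.
Import Order.TTheory GRing.Theory Num.Theory.
Set Implicit Arguments. Unset Strict Implicit. Unset Printing Implicit Defensive.
Local Open Scope ring_scope.

(* Writing a_k = 1 / theta_k, the recursion makes theta_(k+1) the positive
   root of s^2 + theta_k^2 s = theta_k^2, i.e. a_(k+1)^2 - a_(k+1) = a_k^2.
   Hence a_k = 1/theta_k^2 - 1/theta_(k-1)^2 (the convention for theta_(-1)
   is chosen to make this hold at k = 0), so the sum in (2) telescopes.
   Completing the square, (a_(k+1) - 1/2)^2 = a_k^2 + 1/4, so the increments
   a_(k+1) - a_k lie in [1/2, 1/2 + 1/(8 a_k)], which gives (3) and the
   monotonicity (1) by induction. For (4), the floor condition gives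
   (K0 - 1)(1 + 1/nhat) <= K / ups, so (3) bounds 1/theta_(K0-1)^2 by
   (K/(2 ups) + nhat)^2, while 1/theta_K^2 >= (K/2 + nhat)^2. *)

Section ThetaNext.
Variable R : realType.
Implicit Types A B t : R.

Definition theta_next t : R := (Num.sqrt (t ^+ 4 + 4 * t ^+ 2) - t ^+ 2) / 2.

Lemma theta_next_root t : 0 < t ->
  0 < theta_next t /\ theta_next t ^+ 2 + t ^+ 2 * theta_next t = t ^+ 2.
Proof.
move=> t_gt0; rewrite /theta_next.
have sq_s : Num.sqrt (t ^+ 4 + 4 * t ^+ 2) ^+ 2 = t ^+ 4 + 4 * t ^+ 2.
  by rewrite sqr_sqrtr //; nra.
move: (sqrtr_ge0 (t ^+ 4 + 4 * t ^+ 2)) sq_s; move: (Num.sqrt _) => s s_ge0 sq_s.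
split; nra.
Qed.

Lemma theta_next_gt0 t : 0 < t -> 0 < theta_next t.
Proof. by case/theta_next_root. Qed.

Lemma inv_theta_next t : 0 < t ->
  (theta_next t)^-1 ^+ 2 - (theta_next t)^-1 = t^-1 ^+ 2.
Proof.
move=> t_gt0; have [u_gt0 root_u] := theta_next_root t_gt0.
move: u_gt0 root_u; move: (theta_next t) => u u_gt0 root_u.
have [u_neq0 t_neq0] : u != 0 /\ t != 0 by rewrite !gt_eqF.
apply: (mulIf (mulf_neq0 (expf_neq0 2 u_neq0) (expf_neq0 2 t_neq0))).
transitivity (t ^+ 2 - t ^+ 2 * u); first by field.
transitivity (u ^+ 2); last by field.
lra.
Qed.

Lemma sqr_subr_eq_sqr_bounds A B : 0 < A -> 0 < B -> A ^+ 2 - A = B ^+ 2 ->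
  B + 1 / 2 <= A <= B + 1 / 2 + (8 * B)^-1.
Proof.
move=> A_gt0 B_gt0 eqAB.
have sq_diff : (A - 1 / 2 - B) * (A - 1 / 2 + B) = 1 / 4.
  by rewrite -[LHS]subr_sqr -eqAB; field.
have A_gt1 : 1 < A by nra.
have lowA : B + 1 / 2 <= A by nra.
have : A - 1 / 2 - B <= (8 * B)^-1 by rewrite -[(8 * B)^-1]mul1r ler_pdivlMr; nra.
by rewrite lowA /=; lra.
Qed.
End ThetaNext.

Lemma predn_le_of_le_floor (R : archiRealDomainType) (x : R) (m : nat) :
  0 <= x -> (m%:Z <= Num.floor (x + 1))%R -> m.-1%:R <= x.
Proof.
move=> x_ge0 m_le; case: m m_le => [//|m] m_le /=.
have : m.+1%:R <= x + 1 by apply: le_trans (floor_le _); rewrite -(ler_int R) in m_le.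
by rewrite -[m.+1%:R]natr1 lerD2r.
Qed.

Lemma sqr_half_gap_ge (R : realFieldType) (x y u : R) : 0 <= x -> 0 <= y -> 1 <= u ->
  (x ^+ 2 / 4 + y * x) * (1 - u^-1) <= (x / 2 + y) ^+ 2 - (x / (2 * u) + y) ^+ 2.
Proof.
move=> x_ge0 y_ge0 u_ge1; set v := u^-1.
have v_gt0 : 0 < v by rewrite invr_gt0; lra.
have v_le1 : v <= 1 by rewrite invf_le1; lra.
have -> : x / (2 * u) = x * v / 2 by rewrite /v; field; lra.
have : 0 <= x ^+ 2 * v * (1 - v) by apply: mulr_ge0; [nra | lra].
nra.
Qed.

Section Theta.
Context {R : realType} {n : nat}.
Hypothesis n_gt0 : (0 < n)%N.

Local Notation th := (@theta R n).

Lemma natr_n_gt0 : 0 < n%:R :> R.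
Proof. by rewrite ltr0n. Qed.

Lemma thetaS k : th k.+1 = theta_next (th k).
Proof. by []. Qed.

Lemma theta_gt0 k : 0 < th k.
Proof.
elim: k => [|k IH]; first by rewrite /= div1r invr_gt0 natr_n_gt0.
by rewrite thetaS theta_next_gt0.
Qed.

Lemma invtheta_ge0 k : 0 <= (th k)^-1.
Proof. by rewrite invr_ge0 ltW ?theta_gt0. Qed.

Lemma invtheta0 : (th 0)^-1 = n%:R.
Proof. by rewrite /= div1r invrK. Qed.

Lemma invthetaS_sqr k :
  (th k.+1)^-1 ^+ 2 - (th k.+1)^-1 = (th k)^-1 ^+ 2.
Proof. by rewrite thetaS inv_theta_next ?theta_gt0. Qed.

Lemma invthetaS_bounds k :
  (th k)^-1 + 1 / 2 <= (th k.+1)^-1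
  <= (th k)^-1 + 1 / 2 + (8 * (th k)^-1)^-1.
Proof.
by apply: sqr_subr_eq_sqr_bounds (invthetaS_sqr k); rewrite invr_gt0 theta_gt0.
Qed.

Lemma theta_nonincreasing k : th k.+1 <= th k.
Proof.
rewrite -lef_pV2 ?posrE ?theta_gt0 //.
by case/andP: (invthetaS_bounds k); lra.
Qed.

Lemma invtheta_ge k : k%:R / 2 + n%:R <= (th k)^-1.
Proof.
elim: k => [|k IH]; first by rewrite invtheta0 !mul0r !add0r.
by case/andP: (invthetaS_bounds k); rewrite -[k.+1%:R]natr1; lra.
Qed.

Lemma invtheta_le k :
  (th k)^-1 <= k%:R / 2 + k%:R / (2 * n%:R) + n%:R.
Proof.
elim: k => [|k IH]; first by rewrite invtheta0 !mul0r !add0r.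
have inv8_le : (8 * (th k)^-1)^-1 <= (2 * n%:R)^-1.
  rewrite lef_pV2 ?posrE ?mulr_gt0 ?natr_n_gt0 ?invr_gt0 ?theta_gt0 //.
  by have := invtheta_ge k; have := ler0n R k; have := natr_n_gt0; lra.
have -> : k.+1%:R / 2 + k.+1%:R / (2 * n%:R)
          = k%:R / 2 + k%:R / (2 * n%:R) + 1 / 2 + (2 * n%:R)^-1 :> R.
  by rewrite -[k.+1%:R]natr1; field; rewrite gt_eqF ?natr_n_gt0.
by case/andP: (invthetaS_bounds k); lra.
Qed.

Lemma sqr_invtheta_ge k : (k%:R / 2 + n%:R) ^+ 2 <= (th k)^-1 ^+ 2.
Proof.
by apply: lerXn2r (invtheta_ge k); rewrite nnegrE ?invtheta_ge0 ?addr_ge0 ?divr_ge0.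
Qed.

Lemma inv_sq_prevS k : inv_sq_prev n k.+1 = (th k)^-1 ^+ 2.
Proof. by rewrite /= div1r exprVn. Qed.

Lemma invtheta_telescope k :
  (th k)^-1 = inv_sq_prev n k.+1 - inv_sq_prev n k.
Proof.
case: k => [|k]; rewrite !inv_sq_prevS; last by rewrite -(invthetaS_sqr k); ring.
by rewrite invtheta0 /=; ring.
Qed.

Lemma sum_invtheta K0 K : (K0 <= K)%N ->
  \sum_(K0 <= k < K.+1) (th k)^-1 = (th K)^-1 ^+ 2 - inv_sq_prev n K0.
Proof.
move=> K0_le; under eq_bigr do rewrite invtheta_telescope.
by rewrite telescope_sumr ?inv_sq_prevS // leqW.
Qed.

Lemma inv_sq_prev_le (x : R) k : k.-1%:R * (1 + 1 / n%:R) <= x ->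
  inv_sq_prev n k <= (x / 2 + n%:R) ^+ 2.
Proof.
move=> le_x; have n_pos := natr_n_gt0.
have x_ge0 : 0 <= x.
  by apply: le_trans le_x; rewrite mulr_ge0 // addr_ge0 ?divr_ge0 ?ltW.
case: k le_x => [|m] le_x; first by rewrite /= in le_x *; nra.
rewrite inv_sq_prevS; apply: lerXn2r; rewrite ?nnegrE ?invtheta_ge0 //; first by lra.
apply: le_trans (invtheta_le m) _.
have -> : m%:R / 2 + m%:R / (2 * n%:R) = m%:R * (1 + 1 / n%:R) / 2 :> R.
  by field; rewrite gt_eqF.
lra.
Qed.

Lemma inv_sq_prev_le_floor (u : R) K0 K : 0 < u ->
  (K0%:Z <= Num.floor (K%:R / (u * (1 + 1 / n%:R)) + 1))%R ->
  inv_sq_prev n K0 <= (K%:R / (2 * u) + n%:R) ^+ 2.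
Proof.
move=> u_gt0 le_floor; have n_pos := natr_n_gt0.
have w_gt0 : 0 < 1 + 1 / n%:R :> R by rewrite addr_gt0 ?divr_gt0.
have -> : K%:R / (2 * u) = K%:R / u / 2 by field; rewrite gt_eqF.
apply: inv_sq_prev_le; rewrite -ler_pdivlMr // -mulrA -invfM.
apply: predn_le_of_le_floor le_floor.
by rewrite divr_ge0 ?mulr_ge0 // ltW.
Qed.

End Theta.

Theorem lemma2 (R : realType) (nhat : nat) (hn : (1 <= nhat)%N) :
  (* (1) *)
  (forall k : nat, (1 <= k)%N ->
     0 <= theta nhat k :> R
     /\ (forall j : nat, (1 <= j <= k)%N -> theta nhat j <= theta nhat j.-1 :> R)
     /\ theta nhat 0 = 1 / nhat%:R :> R)
  (* (2) *)
  /\ (forall K0 K : nat, (K0 <= K)%N ->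
       \sum_(K0 <= k < K.+1) 1 / theta nhat k
       = 1 / (theta nhat K) ^+ 2 - inv_sq_prev nhat K0 :> R)
  (* (3) *)
  /\ (forall k : nat,
       k%:R / 2 + k%:R / (2 * nhat%:R) + nhat%:R >= 1 / theta nhat k :> R
       /\ 1 / theta nhat k >= k%:R / 2 + nhat%:R :> R)
  (* (4) *)
  /\ (forall (ups : R) (K0 K : nat), 1 < ups ->
       (K0%:Z <= Num.floor (K%:R / (ups * (1 + 1 / nhat%:R)) + 1))%R ->
       1 / (theta nhat K) ^+ 2 - inv_sq_prev nhat K0
       >= ((K%:R) ^+ 2 / 4 + nhat%:R * K%:R) * (1 - 1 / ups)).
Proof.
split; [|split; [|split]].
- move=> k _; split; first exact: ltW (theta_gt0 hn k).
  by split=> // [[|j]] _ //; apply: theta_nonincreasing.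
- move=> K0 K le_K0K; rewrite div1r -exprVn -(sum_invtheta hn le_K0K).
  by apply: eq_bigr => k _; rewrite div1r.
- by move=> k; rewrite div1r invtheta_le // invtheta_ge.
- move=> ups K0 K ups_gt1 le_floor; rewrite !div1r -exprVn.
  apply: le_trans (sqr_half_gap_ge (ler0n _ _) (ler0n _ _) (ltW ups_gt1)) _.
  apply: lerB; first exact: sqr_invtheta_ge.
  exact: inv_sq_prev_le_floor hn _ _ _ (lt_trans ltr01 ups_gt1) le_floor.
Qed.
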